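(* For every graph $G$, $\mathsf{tww}(G)\le 2\cdot\mathsf{mw}(G)-1$. Consequently, every graph class of bounded cliquewidth also has bounded twin-width.
   Context: All graphs are finite, simple, undirected. For $A\subseteq V(G)$, define $u\sim_A v$ for $u,v\in A$ iff $N(u)\setminus A=N(v)\setminus A$; the diversity of $A$ is the number of classes of $\sim_A$. A laminar decomposition of $G$ is a rooted binary tree whose leaf set is $V(G)$; its diversity is the maximum, over nodes $x$, of the diversity of the set of leaves below $x$. The modular-width $\mathsf{mw}(G)$ is the minimum diversity of a laminar decomposition; a class has bounded cliquewidth iff $\mathsf{mw}$ is bounded on it. For disjoint $A,B\subseteq V(G)$, the pair is impure if it is neither complete (all pairs adjacent) nor anti-complete (no pairs adjacent). For a partition $\mathcal P$ of $V(G)$, the error graph $\mathsf{err}(G,\mathcal P)$ has vertex set $\mathcal P$ with two distinct parts adjacent iff they form an impure pair. A contraction sequence of $G$ (with $n=|V(G)|$) is a sequence of partitions $\mathcal P_n,\ldots,\mathcal P_1$ where $\mathcal P_n$ is the partition into singletons, $\mathcal P_1=\{V(G)\}$, and each $\mathcal P_i$ arises from $\mathcal P_{i+1}$ by merging two parts; its width is the maximum over $i$ of the maximum degree of $\mathsf{err}(G,\mathcal P_i)$. The twin-width $\mathsf{tww}(G)$ is the minimum width of a contraction sequence; a class has bounded twin-width iff $\mathsf{tww}$ is bounded on it. *)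

From mathcomp Require Import all_boot.
From mathcomp Require Import boolp.
Set Implicit Arguments. Unset Strict Implicit. Unset Printing Implicit Defensive.

(* A simple graph: vertex type T : finType, adjacency e : rel T,
   assumed symmetric and irreflexive in the theorem. *)

(* Least natural number satisfying a Prop predicate (0 if none). *)
Definition minP (P : nat -> Prop) : nat :=
  match pselect (exists n, `[< P n >]) with
  | left h => ex_minn h
  | right _ => 0
  end.

Section Graph.
Variables (T : finType) (e : rel T).

Definition nbr_out (A : {set T}) (v : T) : {set T} := [set w in ~: A | e v w].

(* diversity of A = number of classes of ~_A (u ~_A v iff N(u)\A = N(v)\A),
   i.e. the number of distinct sets N(v)\A for v in A. *)
Definition diversity (A : {set T}) : nat := #|[set nbr_out A v | v in A]|.

Inductive ltree : Type := Leaf of T | Node of ltree & ltree.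

Fixpoint leaves (t : ltree) : seq T :=
  match t with Leaf v => [:: v] | Node l r => leaves l ++ leaves r end.

Fixpoint subtrees (t : ltree) : seq ltree :=
  match t with
  | Leaf v => [:: t]
  | Node l r => t :: (subtrees l ++ subtrees r)
  end.

Definition laminar_decomp (t : ltree) : Prop :=
  uniq (leaves t) /\ forall v : T, v \in leaves t.

Definition decomp_diversity (t : ltree) : nat :=
  \max_(x <- subtrees t) diversity [set v in leaves x].

Definition mw : nat :=
  minP (fun k => exists t, laminar_decomp t /\ decomp_diversity t = k).

Definition complete_pair (A B : {set T}) : bool :=
  [forall a in A, forall b in B, e a b].
Definition anticomplete_pair (A B : {set T}) : bool :=
  [forall a in A, forall b in B, ~~ e a b].
Definition impure (A B : {set T}) : bool :=
  ~~ complete_pair A B && ~~ anticomplete_pair A B.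

Definition err_deg (P : {set {set T}}) (X : {set T}) : nat :=
  #|[set Y in P | (Y != X) && impure X Y]|.

Definition err_maxdeg (P : {set {set T}}) : nat := \max_(X in P) err_deg P X.

Definition singletons : {set {set T}} := [set [set v] | v : T].

Definition merge_step (P Q : {set {set T}}) : bool :=
  [exists X in P, exists Y in P,
     (X != Y) && (Q == ((P :\ X) :\ Y) :|: [set X :|: Y])].

(* a contraction sequence P_n, ..., P_1 listed in this order *)
Definition contraction_seq (s : seq {set {set T}}) : Prop :=
  match s with
  | [::] => False
  | P :: s' => [/\ P = singletons, path merge_step P s' & last P s' = [set setT]]
  end.

Definition cs_width (s : seq {set {set T}}) : nat := \max_(P <- s) err_maxdeg P.

Definition tww : nat :=
  minP (fun k => exists s, contraction_seq s /\ cs_width s = k).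

End Graph.

From HB Require Import structures.
From mathcomp Require Import all_boot boolp.
Set Implicit Arguments. Unset Strict Implicit. Unset Printing Implicit Defensive.

(* Fix a laminar decomposition t of diversity k and contract bottom-up along
   t.  At every moment V(G) is cut into the leaf sets of a front of t (an
   antichain of nodes covering all leaves); every part lies inside one block B
   of the front, all its vertices have the same neighbourhood outside B, and
   each block holds at most 2k parts.  Two parts lying in different blocks then
   form a pure pair, so every part has at most 2k-1 neighbours in the error
   graph.  Inside a block we merge two parts whenever all their vertices have
   the same neighbourhood outside the block.  When no such merge is possible a
   block B holds at most diversity(B) <= k parts, so two sibling blocks can be
   replaced by their parent while keeping at most 2k parts per block.  At the
   root every two parts can be merged, which ends with the single part V(G). *)

Lemma minP_le (P : nat -> Prop) n : P n -> minP P <= n.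
Proof.
move=> Pn; rewrite /minP; case: pselect => [h|[]]; last by exists n; apply/asboolP.
by case: ex_minnP => m _; apply; apply/asboolP.
Qed.

Lemma minP_spec (P : nat -> Prop) : (exists n, P n) -> P (minP P).
Proof.
move=> [n Pn]; rewrite /minP; case: pselect => [h|[]]; last by exists n; apply/asboolP.
by case: ex_minnP => m /asboolP.
Qed.

Lemma minP_eq0 (P : nat -> Prop) : ~ (exists n, P n) -> minP P = 0.
Proof.
move=> nP; rewrite /minP; case: pselect => [h|//].
by case: nP; case: h => n /asboolP; exists n.
Qed.

Lemma uniq_flatten_map_eq (A T : eqType) (f : A -> seq T) s a b x :
  uniq (flatten (map f s)) -> a \in s -> b \in s -> x \in f a -> x \in f b ->
  a = b.
Proof.
elim: s => //= c s IHs; rewrite cat_uniq => /and3P[_ fc_s s_uniq].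
have fc_sF d : d \in s -> x \in f c -> x \in f d -> False.
  move=> ds xc xd; case/negP: fc_s; apply/hasP; exists x => //.
  by apply/flatten_mapP; exists d.
rewrite !inE => /predU1P[->|a_s] /predU1P[->|b_s] xa xb //.
- by case: (fc_sF b).
- by case: (fc_sF a).
- exact: IHs.
Qed.

Lemma mem_splice (A : eqType) (s1 m m' s2 : seq A) x :
  x \in s1 ++ m ++ s2 -> x \in m \/ x \in s1 ++ m' ++ s2.
Proof. by rewrite !mem_cat => /or3P[]->; rewrite ?orbT; auto. Qed.

Section LabelledTrees.
Variable T : finType.
Implicit Types (t u B : ltree T) (F : seq (ltree T)).

Fixpoint ltree_eqb t u :=
  match t, u with
  | Leaf v, Leaf w => v == w
  | Node l r, Node l' r' => ltree_eqb l l' && ltree_eqb r r'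
  | _, _ => false
  end.

Lemma ltree_eqP : Equality.axiom ltree_eqb.
Proof.
elim=> [v|l IHl r IHr] [w|l' r'] /=; try by constructor.
  by apply: (iffP eqP) => [->|[]].
by apply: (iffP andP) => [[/IHl-> /IHr->]|[<- <-]]; split; [apply/IHl|apply/IHr].
Qed.

HB.instance Definition _ := hasDecEq.Build (ltree T) ltree_eqP.

Definition leafset u : {set T} := [set v in leaves u].

Lemma leafset_Node l r : leafset (Node l r) = leafset l :|: leafset r.
Proof. by apply/setP => v; rewrite !inE mem_cat. Qed.

Lemma exists_leaf u : exists v, v \in leaves u.
Proof.
by elim: u => [v|l [v vl] r _]; exists v; rewrite /= ?mem_head ?mem_cat ?vl.
Qed.

Lemma mem_subtrees_self u : u \in subtrees u.
Proof. by case: u => [v|l r]; rewrite mem_head. Qed.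

Inductive front : ltree T -> seq (ltree T) -> Prop :=
| front_self u : front u [:: u]
| front_node l r fl fr : front l fl -> front r fr -> front (Node l r) (fl ++ fr).

Lemma front_flatten t F : front t F -> flatten (map (@leaves T) F) = leaves t.
Proof.
elim=> [u|l r fl fr _ IHl _ IHr] /=; first by rewrite cats0.
by rewrite map_cat flatten_cat IHl IHr.
Qed.

Lemma front_subtrees t F B : front t F -> B \in F -> B \in subtrees t.
Proof.
elim=> [u|l r fl fr _ IHl _ IHr].
  by rewrite inE => /eqP->; apply: mem_subtrees_self.
by rewrite mem_cat /= inE mem_cat => /orP[/IHl|/IHr]->; rewrite !orbT.
Qed.

Lemma front_leaves u : front u [seq Leaf v | v <- leaves u].
Proof.
elim: u => [v|l IHl r IHr] /=; first exact: front_self.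
by rewrite map_cat; apply: front_node.
Qed.

Lemma front_mem_eq t F B1 B2 v : uniq (leaves t) -> front t F ->
  B1 \in F -> B2 \in F -> v \in leafset B1 -> v \in leafset B2 -> B1 = B2.
Proof.
move=> t_uniq tF B1F B2F; rewrite !inE; apply: uniq_flatten_map_eq B1F B2F.
by rewrite (front_flatten tF).
Qed.

Lemma front_coarsen t F : front t F -> F != [:: t] ->
  exists pre post a b,
    F = pre ++ [:: a, b & post] /\ front t (pre ++ Node a b :: post).
Proof.
elim=> [u|l r fl fr fl_l IHl fr_r IHr]; first by rewrite eqxx.
move=> _; have [El|/IHl[pre [post [a [b [-> fr']]]]]] := eqVneq fl [:: l]; last first.
  exists pre, (post ++ fr), a, b; rewrite -!catA; split=> //.
  by have := front_node fr' fr_r; rewrite -catA.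
have [Er|/IHr[pre [post [a [b [-> fr']]]]]] := eqVneq fr [:: r].
  by exists [::], [::], l, r; rewrite El Er; split=> //; apply: front_self.
exists (fl ++ pre), post, a, b; rewrite -!catA; split=> //.
exact: front_node.
Qed.

End LabelledTrees.

Section Partitions.
Variables (T : finType) (e : rel T).
Implicit Types (A B X Y Z : {set T}) (P : {set {set T}}).

Definition homogeneous A X := {in X &, forall x y, nbr_out e A x = nbr_out e A y}.

Definition parts_in P A := [set X in P | X \subset A].

Definition merge_parts P X Y := P :\ X :\ Y :|: [set X :|: Y].

Lemma homogeneousS A A' X : A \subset A' -> homogeneous A X -> homogeneous A' X.
Proof.
move=> sAA' hX x y xX yX; apply/setP => w; have /setP/(_ w) := hX x y xX yX.
rewrite !inE; case: (boolP (w \in A')) => //= wA'.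
by have -> : w \notin A by apply: contra wA'; apply: subsetP.
Qed.

Lemma homogeneous_pure A B X Y : symmetric e ->
  [disjoint X & B] -> [disjoint Y & A] -> homogeneous A X -> homogeneous B Y ->
  ~~ impure e X Y.
Proof.
move=> esym dXB dYA hX hY.
have e_const x x' y y' :
    x \in X -> x' \in X -> y \in Y -> y' \in Y -> e x y = e x' y'.
  move=> xX x'X yY y'Y.
  have /setP/(_ y) := hX x x' xX x'X; rewrite !inE (disjointFr dYA yY) /= => ->.
  have /setP/(_ x') := hY y y' yY y'Y; rewrite !inE (disjointFr dXB x'X) /=.
  by rewrite esym => ->; rewrite esym.
rewrite /impure; case: (boolP (complete_pair e X Y)) => //=.
case/forall_inPn => x0 x0X /forall_inPn[y0 y0Y /negbTE exy0]; rewrite negbK.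
apply/forall_inP => x xX; apply/forall_inP => y yY.
by rewrite (e_const x x0 y y0) ?exy0.
Qed.

Lemma card_le_diversity A (S : {set {set T}}) :
  (forall X, X \in S -> [/\ X != set0, X \subset A & homogeneous A X]) ->
  {in S &, forall X Y, homogeneous A (X :|: Y) -> X = Y} ->
  #|S| <= diversity e A.
Proof.
(* [f X] is the common value of [nbr_out e A] on X, without choosing a vertex of X. *)
move=> hS mergeS; pose f X := \bigcup_(x in X) nbr_out e A x.
have fE X x : X \in S -> x \in X -> f X = nbr_out e A x.
  case/hS => _ _ hX xX; apply/eqP; rewrite eqEsubset (bigcup_sup x xX) andbT.
  by apply/bigcupsP => y yX; rewrite (hX y x yX xX).
have f_inj : {in S &, injective f}.
  move=> X Y XS YS fXY; apply: mergeS => // x y.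
  by rewrite !inE => /orP[xX|xY] /orP[yX|yY];
    rewrite -?(fE X x XS xX) -?(fE Y x YS xY) -?(fE X y XS yX) -?(fE Y y YS yY).
rewrite -(card_in_imset f_inj); apply/subset_leq_card/subsetP => _ /imsetP[X XS ->].
have [/set0Pn[x xX] XA _] := hS X XS.
by rewrite (fE X x XS xX); apply: imset_f; apply: subsetP xX.
Qed.

Lemma diversity_gt0 A : A != set0 -> 0 < diversity e A.
Proof.
by case/set0Pn => x xA; apply/card_gt0P; exists (nbr_out e A x); apply: imset_f.
Qed.

Lemma diversity_setT : diversity e [set: T] <= 1.
Proof.
rewrite -(cards1 (set0 : {set T})); apply/subset_leq_card/subsetP => _ /imsetP[x _ ->].
by rewrite inE; apply/eqP/setP => w; rewrite !inE.
Qed.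

Lemma err_deg_lt P A X : X \in P -> X \subset A ->
  {in P, forall Y, impure e X Y -> Y \subset A} -> err_deg e P X < #|parts_in P A|.
Proof.
move=> XP XA impA; rewrite (cardsD1 X) inE XP XA add1n ltnS.
apply/subset_leq_card/subsetP => Y; rewrite !inE => /andP[YP /andP[-> /(impA Y YP)->]].
by rewrite YP.
Qed.

Lemma merge_stepP P X Y : X \in P -> Y \in P -> X != Y ->
  merge_step P (merge_parts P X Y).
Proof.
move=> XP YP nXY; apply/exists_inP; exists X => //; apply/exists_inP; exists Y => //.
by rewrite nXY eqxx.
Qed.

Lemma card_merge_parts P X Y : X \in P -> Y \in P -> X != Y ->
  #|merge_parts P X Y| < #|P|.
Proof.
move=> XP YP nXY; rewrite (cardsD1 X P) (cardsD1 Y (P :\ X)) XP !inE YP eq_sym nXY.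
by apply: leq_ltn_trans (leq_card_setU _ _) _; rewrite cards1 addn1.
Qed.

Lemma card_parts_in_merge P A X Y : X \in P ->
  #|parts_in (merge_parts P X Y) A| <= #|parts_in P A|.
Proof.
move=> XP; pose g Z := if (Z == X) || (Z == Y) then X :|: Y else Z.
apply: leq_trans (leq_imset_card g _); apply/subset_leq_card/subsetP => Z.
rewrite !inE => /andP[/orP[/and3P[nZY nZX ZP]|/eqP->] ZA].
  by apply/imsetP; exists Z; rewrite /g ?inE ?ZP ?ZA // (negbTE nZX) (negbTE nZY).
apply/imsetP; exists X; last by rewrite /g eqxx.
by rewrite inE XP; apply: subset_trans ZA; apply: subsetUl.
Qed.

Lemma partition_merge P D X Y : partition P D -> X \in P -> Y \in P -> X != Y ->
  partition (merge_parts P X Y) D.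
Proof.
move=> partP XP YP nXY.
have YPX : Y \in P :\ X by rewrite !inE YP eq_sym nXY.
have XYD : X :|: Y \subset D by rewrite subUset !(partitionS partP).
have -> : D = X :|: Y :|: D :\: X :\: Y.
  by rewrite setDDl -{1}(setID D (X :|: Y)) (setIidPr XYD).
rewrite /merge_parts (setUC (P :\ X :\ Y)).
apply: partitionU1; first exact: partitionD1 (partitionD1 partP XP) YPX.
  apply: contraNneq _ (partition_neq0 partP XP) => XY0.
  by rewrite -subset0 -XY0 subsetUl.
rewrite disjoints_subset; apply/subsetP => v.
by rewrite !inE => /orP[]->; rewrite ?andbF.
Qed.

Lemma partition_singletons : partition (singletons T) [set: T].
Proof.
apply/and3P; split.
- rewrite cover_imset; apply/eqP/setP => v.
  by rewrite inE; apply/bigcupP; exists v; rewrite ?inE.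
- apply/trivIsetP => _ _ /imsetP[u _ ->] /imsetP[w _ ->].
  by rewrite disjoints1 inE; apply: contra => /eqP->.
- by apply/imsetP => -[v _ /setP/(_ v)]; rewrite !inE eqxx.
Qed.

Lemma partition_card_le1 P D :
  partition P D -> #|P| <= 1 -> D != set0 -> P = [set D].
Proof.
move=> partP P_le1 /set0Pn[x]; rewrite -(cover_partition partP) => /bigcupP[Z ZP _].
have PZ : P = [set Z] by apply/eqP; rewrite eq_sym eqEcard sub1set ZP cards1.
by rewrite PZ cover1.
Qed.

End Partitions.

Section BottomUpContraction.
Variables (T : finType) (e : rel T) (t : ltree T) (k : nat).
Hypotheses (e_sym : symmetric e) (t_uniq : uniq (leaves t))
  (t_all : forall v, v \in leaves t)
  (t_div : {in subtrees t, forall B, diversity e (leafset B) <= k}).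
Implicit Types (P : {set {set T}}) (F : seq (ltree T)) (X Y : {set T}).

Record admissible P F : Prop := Admissible {
  adm_front : front t F;
  adm_partition : partition P [set: T];
  adm_homogeneous : forall X, X \in P ->
    exists2 B, B \in F & X \subset leafset B /\ homogeneous e (leafset B) X;
  adm_parts : {in F, forall B, #|parts_in P (leafset B)| <= k.*2} }.

Definition mergeable P F := exists B X Y,
  [/\ B \in F, X \in parts_in P (leafset B), Y \in parts_in P (leafset B),
      X != Y & homogeneous e (leafset B) (X :|: Y)].

Lemma admissible_block P F X B x : admissible P F -> X \in P -> B \in F ->
  x \in X -> x \in leafset B -> X \subset leafset B /\ homogeneous e (leafset B) X.
Proof.
move=> adm XP BF xX xB; have [B' B'F XB'] := adm_homogeneous adm XP.
by rewrite (front_mem_eq t_uniq (adm_front adm) BF B'F xB (subsetP XB'.1 x xX)).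
Qed.

Lemma impure_sub_block P F X Y B : admissible P F -> X \in P -> Y \in P ->
  B \in F -> X \subset leafset B -> homogeneous e (leafset B) X ->
  impure e X Y -> Y \subset leafset B.
Proof.
move=> adm XP YP BF XB hX; apply: contraTT => YnB.
have [B' B'F [YB' hY]] := adm_homogeneous adm YP.
have dBB' : [disjoint leafset B & leafset B'].
  rewrite disjoints_subset; apply/subsetP => v vB; rewrite inE; apply/negP => vB'.
  by case/negP: YnB; rewrite (front_mem_eq t_uniq (adm_front adm) BF B'F vB vB').
apply: homogeneous_pure e_sym _ _ hX hY; first exact: disjointWl XB dBB'.
by rewrite disjoint_sym in dBB'; apply: disjointWl YB' dBB'.
Qed.

Lemma adm_maxdeg P F : admissible P F -> err_maxdeg e P <= k.*2 - 1.
Proof.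
move=> adm; apply/bigmax_leqP => X XP.
have [B BF [XB hX]] := adm_homogeneous adm XP.
have degX := err_deg_lt XP XB (fun Y YP => impure_sub_block adm XP YP BF XB hX).
have lt := leq_trans degX (adm_parts adm BF).
by rewrite subn1 -ltnS (ltn_predK lt).
Qed.

Lemma adm_merge P F B X Y : admissible P F -> B \in F ->
  X \in parts_in P (leafset B) -> Y \in parts_in P (leafset B) -> X != Y ->
  homogeneous e (leafset B) (X :|: Y) -> admissible (merge_parts P X Y) F.
Proof.
move=> adm BF; rewrite !inE => /andP[XP XB] /andP[YP YB] nXY hXY; split.
- exact: adm_front adm.
- exact: partition_merge (adm_partition adm) XP YP nXY.
- move=> Z; rewrite !inE => /orP[/and3P[_ _ /(adm_homogeneous adm)]//|/eqP->].
  by exists B; rewrite ?subUset ?XB ?YB.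
- by move=> B' B'F; apply: leq_trans (card_parts_in_merge _ Y XP) (adm_parts adm B'F).
Qed.

Lemma card_parts_unmergeable P F B : admissible P F -> ~ mergeable P F ->
  B \in F -> #|parts_in P (leafset B)| <= diversity e (leafset B).
Proof.
move=> adm nm BF; apply: card_le_diversity => [X|X Y XB YB hXY].
  rewrite inE => /andP[XP XB]; have X0 := partition_neq0 (adm_partition adm) XP.
  have /set0Pn[x xX] := X0.
  by have [_ hX] := admissible_block adm XP BF xX (subsetP XB x xX).
by case: (eqVneq X Y) => // nXY; case: nm; exists B, X, Y.
Qed.

Lemma adm_coarsen P pre a b post :
  admissible P (pre ++ [:: a, b & post]) -> ~ mergeable P (pre ++ [:: a, b & post]) ->
  front t (pre ++ Node a b :: post) -> admissible P (pre ++ Node a b :: post).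
Proof.
set F := pre ++ _; set F' := pre ++ _ => adm nm frontF'.
have aF : a \in F by rewrite mem_cat !inE eqxx !orbT.
have bF : b \in F by rewrite mem_cat !inE eqxx !orbT.
have parts_le_k B : B \in F -> #|parts_in P (leafset B)| <= k.
  move=> BF; apply: leq_trans (card_parts_unmergeable adm nm BF) _.
  exact/t_div/(front_subtrees (adm_front adm) BF).
split=> //.
- exact: adm_partition adm.
- move=> X XP; have [B BF [XB hX]] := adm_homogeneous adm XP.
  case: (mem_splice (m := [:: a; b]) [:: Node a b] BF) => [Bab|BF']; last by exists B.
  have sBN : leafset B \subset leafset (Node a b).
    rewrite leafset_Node; move: Bab; rewrite !inE => /orP[]/eqP->.
      exact: subsetUl.
    exact: subsetUr.
  exists (Node a b); first by rewrite mem_cat mem_head orbT.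
  by split; [apply: subset_trans sBN | apply: homogeneousS hX].
- move=> B /(mem_splice (m := [:: Node a b]) [:: a; b]) [|BF]; last first.
    exact: adm_parts adm _ BF.
  rewrite inE => /eqP->; rewrite -addnn leafset_Node.
  apply: leq_trans (leq_add (parts_le_k a aF) (parts_le_k b bF)).
  apply: leq_trans (leq_card_setU _ _); apply/subset_leq_card/subsetP => X.
  rewrite in_setU !inE => /andP[XP XN].
  have /set0Pn[x xX] := partition_neq0 (adm_partition adm) XP.
  case/setUP: (subsetP XN x xX) => [xa|xb].
    by have [-> _] := admissible_block adm XP aF xX xa; rewrite XP.
  by have [-> _] := admissible_block adm XP bF xX xb; rewrite XP orbT.
Qed.

Lemma adm_root P : admissible P [:: t] -> ~ mergeable P [:: t] -> P = [set setT].
Proof.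
move=> adm nm; have tT : leafset t = setT by apply/setP => v; rewrite !inE t_all.
have [x _] := exists_leaf t.
apply: partition_card_le1 (adm_partition adm) _ _; last by apply/set0Pn; exists x.
have -> : P = parts_in P (leafset t) by apply/setP => X; rewrite !inE tT subsetT andbT.
apply: leq_trans (card_parts_unmergeable adm nm (mem_head _ _)) _.
by rewrite tT diversity_setT.
Qed.

Lemma adm_contraction P F : admissible P F ->
  exists s, [/\ path (@merge_step T) P s, last P s = [set setT]
              & {in P :: s, forall Q, exists F', admissible Q F'}].
Proof.
have [n] := ubnP (#|P| + size F); elim: n => // n IHn in P F *.
rewrite ltnS => size_PF adm.
have [PT|nT] := eqVneq P [set setT].
  by exists [::]; split=> // Q; rewrite mem_seq1 => /eqP->; exists F.
have [[B [X [Y [BF XB YB nXY hXY]]]]|nm] := EM (mergeable P F).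
  have [XP YP] : X \in P /\ Y \in P.
    by move: XB YB; rewrite !inE => /andP[-> _] /andP[-> _].
  have [|s [merge_s last_s adm_s]] := IHn _ _ _ (adm_merge adm BF XB YB nXY hXY).
    by apply: leq_trans size_PF; rewrite ltn_add2r card_merge_parts.
  exists (merge_parts P X Y :: s); split=> //=; first by rewrite merge_stepP.
  by move=> Q; rewrite inE => /predU1P[->|/adm_s]; first exists F.
have [Ft|nFt] := eqVneq F [:: t].
  by move: adm nm; rewrite Ft => adm /(adm_root adm) PT; rewrite PT eqxx in nT.
have [pre [post [a [b [EF frontF']]]]] := front_coarsen (adm_front adm) nFt.
move: adm nm; rewrite EF => adm nm; apply: IHn (adm_coarsen adm nm frontF').
by apply: leq_trans size_PF; rewrite EF ltn_add2l !size_cat ltn_add2l.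
Qed.

Lemma adm_singletons : admissible (singletons T) [seq Leaf v | v <- leaves t].
Proof.
split.
- exact: front_leaves.
- exact: partition_singletons.
- move=> _ /imsetP[v _ ->]; exists (Leaf v); first exact: map_f.
  by split=> [|x y]; rewrite ?sub1set !inE // => /eqP-> /eqP->.
- move=> _ /mapP[v vt ->].
  have Lv : Leaf v \in subtrees t := front_subtrees (front_leaves t) (map_f _ vt).
  have k_gt0 : 0 < k.
    apply: leq_trans (t_div Lv); apply: diversity_gt0.
    by apply/set0Pn; exists v; rewrite !inE.
  apply: (@leq_trans 1); last by rewrite -addnn (leq_trans k_gt0) ?leq_addr.
  rewrite -(cards1 [set v]); apply/subset_leq_card/subsetP => X.
  by rewrite !inE => /andP[/imsetP[w _ ->]]; rewrite sub1set !inE => /eqP->.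
Qed.

Lemma contraction_seq_of_decomp :
  exists s, contraction_seq s /\ cs_width e s <= k.*2 - 1.
Proof.
have [s [merge_s last_s adm_s]] := adm_contraction adm_singletons.
exists (singletons T :: s); split=> //.
by apply/bigmax_leqP_seq => Q Qs _; have [F adm] := adm_s Q Qs; apply: adm_maxdeg adm.
Qed.

End BottomUpContraction.

Fixpoint caterpillar (T : finType) (x : T) (s : seq T) : ltree T :=
  if s is y :: s' then Node (Leaf x) (caterpillar y s') else Leaf x.

Lemma caterpillar_leaves (T : finType) (x : T) s : leaves (caterpillar x s) = x :: s.
Proof. by elim: s x => [|y s IHs] x //=; rewrite IHs. Qed.

Lemma exists_laminar_decomp (T : finType) (x : T) : exists t : ltree T, laminar_decomp t.
Proof.
case Eenum: (enum T) (mem_enum T x) => [//|y s] _.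
exists (caterpillar y s); rewrite /laminar_decomp caterpillar_leaves -Eenum enum_uniq.
by split=> // v; rewrite mem_enum.
Qed.

Lemma contraction_seq_card_gt0 (T : finType) (s : seq {set {set T}}) :
  contraction_seq s -> 0 < #|T|.
Proof.
case: s => // P s [P1 merge_s last_s]; have : P != set0.
  case: s merge_s last_s => [_ /= ->|Q s /andP[/exists_inP[X XP _] _] _].
    by apply/set0Pn; exists setT; rewrite inE.
  by apply/set0Pn; exists X.
by rewrite P1 => /set0Pn[_ /imsetP[v _ _]]; apply/card_gt0P; exists v.
Qed.

Lemma tww_le_decomp_diversity (T : finType) (e : rel T) (t : ltree T) :
  symmetric e -> laminar_decomp t -> tww e <= (decomp_diversity e t).*2 - 1.
Proof.
move=> e_sym [t_uniq t_all].
have t_div :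
    {in subtrees t, forall B, diversity e (leafset B) <= decomp_diversity e t}.
  by move=> B Bt; apply: (leq_bigmax_seq (F := fun u => diversity e (leafset u))).
have [s [cs_s width_s]] := contraction_seq_of_decomp e_sym t_uniq t_all t_div.
by apply: leq_trans width_s; apply: minP_le; exists s.
Qed.

Lemma tww_le_mw (T : finType) (e : rel T) : symmetric e -> tww e <= 2 * mw e - 1.
Proof.
(* On the empty graph there is neither a decomposition nor a contraction
   sequence, and both minima take the default value 0. *)
move=> e_sym; have [T0|/card_gt0P[x _]] := posnP #|T|.
  by rewrite /tww minP_eq0 // => -[n [s [/contraction_seq_card_gt0]]]; rewrite T0.
have [t0 dt0] := exists_laminar_decomp x.
have [t [dt <-]] : exists t, laminar_decomp t /\ decomp_diversity e t = mw e.
  apply: (minP_spec (P := fun n => exists t, laminar_decomp t /\ _ = n)).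
  by exists (decomp_diversity e t0), t0.
by rewrite mul2n; apply: tww_le_decomp_diversity.
Qed.

Theorem theorem3p43 :
  (forall (T : finType) (e : rel T), symmetric e -> irreflexive e ->
     tww e <= 2 * mw e - 1) /\
  (forall k : nat, exists c : nat, forall (T : finType) (e : rel T),
     symmetric e -> irreflexive e -> mw e <= k -> tww e <= c).
Proof.
split=> [T e e_sym _|k]; first exact: tww_le_mw.
exists (2 * k - 1) => T e e_sym _ mw_le_k.
by apply: leq_trans (tww_le_mw e_sym) _; rewrite leq_sub2r // leq_mul2l mw_le_k orbT.
Qed.
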